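(* Let $a,b>0$, $\alpha\in\mathbb R$, and $\rho_1,\rho_2\ge0$ with $\rho_1>0$ or $\rho_2>0$. Let $X\sim\mathrm{Binom}(m_1,\frac{a\log n}{n})$ and $R\sim\mathrm{Binom}(m_2,\frac{b\log n}{n})$ be independent, where $m_1=\rho_1n+o(n)$ and $m_2=\rho_2n+o(n)$, and let $k$ be an integer with $k=\alpha\log n+o(\log n)$. If $\alpha\le a\rho_1-b\rho_2$ (and, when $\rho_2=0$, $\alpha>0$), then $$\mathbb P\{X-R\le k\}=n^{-g(\rho_1,\rho_2,a,b,\alpha)+o(1)},$$ where, with $\gamma=\sqrt{\alpha^2+4\rho_1\rho_2ab}$, $$g(\rho_1,\rho_2,a,b,\alpha)=\begin{cases}a\rho_1+b\rho_2-\gamma-\frac{\alpha}{2}\log\frac{(\gamma-\alpha)a\rho_1}{(\gamma+\alpha)b\rho_2},&\rho_1,\rho_2>0,\\ \rho_2b+\alpha\log\frac{-e\rho_2b}{\alpha},&\rho_1=0,\rho_2>0,\\ \rho_1a-\alpha\log\frac{e\rho_1a}{\alpha},&\rho_1>0,\rho_2=0.\end{cases}$$ Furthermore, for any nonnegative integers $m_1,m_2$ (not both zero) and integer $k$ with $k\le(m_1a-m_2b)\log n/n$ (and $k>0$ if $m_2=0$), $$\mathbb P\{X-R\le k\}\le n^{-g(m_1/n,\,m_2/n,\,a,\,b,\,k/\log n)}.$$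
   Context: $\mathrm{Binom}(m,p)$ denotes the binomial distribution; logarithms are natural. *)

From Stdlib Require Import Reals Lra Lia ZArith Arith.
Open Scope R_scope.

Definition binom_pmf (m : nat) (p : R) (x : nat) : R :=
  C m x * p ^ x * (1 - p) ^ (m - x).

(* P{X - R <= k} for independent X ~ Binom(m1,p), R ~ Binom(m2,q),
   written as the explicit finite sum over the joint pmf. *)
Definition prob_diff_le (m1 m2 : nat) (p q : R) (k : Z) : R :=
  sum_f_R0 (fun x =>
    sum_f_R0 (fun r =>
      if Z_le_dec (Z.of_nat x - Z.of_nat r) k
      then binom_pmf m1 p x * binom_pmf m2 q r else 0) m2) m1.

Definition gamma_ (r1 r2 a b al : R) : R :=
  sqrt (al ^ 2 + 4 * r1 * r2 * a * b).

Definition g (r1 r2 a b al : R) : R :=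
  if Rlt_dec 0 r1 then
    if Rlt_dec 0 r2 then
      a * r1 + b * r2 - gamma_ r1 r2 a b al
      - al / 2 * ln (((gamma_ r1 r2 a b al - al) * a * r1)
                     / ((gamma_ r1 r2 a b al + al) * b * r2))
    else r1 * a - al * ln (exp 1 * r1 * a / al)
  else r2 * b + al * ln (- exp 1 * r2 * b / al).

From Stdlib Require Import Reals ZArith Arith Lra Lia.
From Coquelicot Require Import Coquelicot.
Open Scope R_scope.

(* Upper bound (Chernoff): for [0 < s <= 1], [1{X - R <= k} <= s^X s^(-R) s^(-k)], and
   [E s^X <= exp (m1 p (s - 1))], [E s^(-R) <= exp (m2 q (1/s - 1))]; with
   [p = a log n / n], [q = b log n / n] this reads [P{X - R <= k} <= n^F(s)] with
   [F(s) = rho1 a (s - 1) + rho2 b (1/s - 1) - alpha log s].  The critical point of F,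
   [rho1 a s - rho2 b / s = alpha], lies in (0, 1] exactly when [alpha <= a rho1 - b rho2],
   and there [F(s) = -g].
   Lower bound: [P{X - R <= k} >= P{X = x} P{R = r}] with [x ~ rho1 a s log n] and
   [r ~ (rho2 b / s) log n], chosen so that [x - r <= k].  Stirling-type bounds give
   [P{Binom(rho n, c log n / n) = tau log n} = n^(tau (log (rho c / tau) + 1) - rho c + o(1))],
   and at the critical point the two exponents add up to [F(s)]. *)

(* Stdlib's [C m x] is positive even for [x > m], where it is a junk value. *)
Lemma C_pos m x : 0 < Binomial.C m x.
Proof.
  unfold Binomial.C. apply Rdiv_lt_0_compat; [apply lt_0_INR, lt_O_fact|].
  apply Rmult_lt_0_compat; apply lt_0_INR, lt_O_fact.
Qed.

Lemma binom_pmf_nonneg m p x : 0 <= p <= 1 -> 0 <= binom_pmf m p x.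
Proof.
  intros Hp. unfold binom_pmf.
  apply Rmult_le_pos; [apply Rmult_le_pos|]; try (apply pow_le; lra).
  apply Rlt_le, C_pos.
Qed.

Lemma binom_pmf_pos m p x : 0 < p < 1 -> 0 < binom_pmf m p x.
Proof.
  intros Hp. unfold binom_pmf.
  apply Rmult_lt_0_compat; [apply Rmult_lt_0_compat|]; try (apply pow_lt; lra).
  apply C_pos.
Qed.

Lemma term_le_sum_f_R0 (f : nat -> R) n i :
  (forall j, 0 <= f j) -> (i <= n)%nat -> f i <= sum_f_R0 f n.
Proof.
  intros Hf Hi. induction n as [|n IH]; simpl.
  - replace i with 0%nat by lia. lra.
  - destruct (Nat.eq_dec i (S n)) as [->|Hne].
    + pose proof (cond_pos_sum f n Hf). lra.
    + assert (f i <= sum_f_R0 f n) by (apply IH; lia). pose proof (Hf (S n)). lra.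
Qed.

Lemma sum_f_R0_mul (A B : nat -> R) n m :
  sum_f_R0 A n * sum_f_R0 B m =
  sum_f_R0 (fun i => sum_f_R0 (fun j => A i * B j) m) n.
Proof.
  rewrite (Rmult_comm (sum_f_R0 A n)), scal_sum. apply sum_eq; intros i _.
  rewrite scal_sum. apply sum_eq; intros; ring.
Qed.

Lemma binom_pmf_mul_le_prob_diff_le m1 m2 p q k x r :
  0 <= p <= 1 -> 0 <= q <= 1 -> (x <= m1)%nat -> (r <= m2)%nat ->
  (Z.of_nat x - Z.of_nat r <= k)%Z ->
  binom_pmf m1 p x * binom_pmf m2 q r <= prob_diff_le m1 m2 p q k.
Proof.
  intros Hp Hq Hx Hr Hk.
  assert (Hterm : forall x r, 0 <= if Z_le_dec (Z.of_nat x - Z.of_nat r) k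
      then binom_pmf m1 p x * binom_pmf m2 q r else 0).
  { intros x' r'. destruct Z_le_dec; [|lra].
    apply Rmult_le_pos; apply binom_pmf_nonneg; auto. }
  unfold prob_diff_le.
  eapply Rle_trans; [|apply (term_le_sum_f_R0 _ m1 x); [intros; apply cond_pos_sum|]; auto].
  eapply Rle_trans; [|apply (term_le_sum_f_R0 _ m2 r); auto].
  cbv beta. destruct Z_le_dec; [lra|contradiction].
Qed.

Lemma binom_pgf m p s :
  sum_f_R0 (fun x => binom_pmf m p x * s ^ x) m = (p * s + (1 - p)) ^ m.
Proof.
  rewrite binomial. apply sum_eq; intros i _. unfold binom_pmf.
  rewrite Rpow_mult_distr. ring.
Qed.

Lemma binom_pgf_le_exp m p s : 0 <= p <= 1 -> 0 < s ->
  sum_f_R0 (fun x => binom_pmf m p x * s ^ x) m <= exp (INR m * (p * (s - 1))).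
Proof.
  intros Hp Hs. rewrite binom_pgf.
  replace (INR m * (p * (s - 1))) with (INR m * ln (exp (p * (s - 1))))
    by (rewrite ln_exp; reflexivity).
  fold (Rpower (exp (p * (s - 1))) (INR m)). rewrite Rpower_pow by apply exp_pos.
  apply pow_incr. pose proof (exp_ineq1_le (p * (s - 1))). nra.
Qed.

Lemma markov_weight_ge_1 (s : R) (x r : nat) (k : Z) :
  0 < s <= 1 -> (Z.of_nat x - Z.of_nat r <= k)%Z ->
  1 <= s ^ x * (/ s) ^ r * exp (- IZR k * ln s).
Proof.
  intros Hs Hk.
  assert (Hln : ln s <= 0) by (rewrite <- ln_1; apply ln_le; lra).
  apply IZR_le in Hk. rewrite minus_IZR, <- !INR_IZR_INZ in Hk.
  replace (s ^ x * (/ s) ^ r * exp (- IZR k * ln s))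
    with (exp ((INR x - INR r - IZR k) * ln s)).
  - pose proof (exp_ineq1_le ((INR x - INR r - IZR k) * ln s)). nra.
  - rewrite <- (exp_ln (s ^ x)), <- (exp_ln ((/ s) ^ r)), <- !exp_plus
      by (apply pow_lt; try apply Rinv_0_lt_compat; lra).
    rewrite !ln_pow, ln_Rinv by (try apply Rinv_0_lt_compat; lra).
    f_equal. ring.
Qed.

Lemma prob_diff_le_chernoff m1 m2 p q k s :
  0 <= p <= 1 -> 0 <= q <= 1 -> 0 < s <= 1 ->
  prob_diff_le m1 m2 p q k <=
  exp (INR m1 * (p * (s - 1)) + INR m2 * (q * (/ s - 1)) - IZR k * ln s).
Proof.
  intros Hp Hq Hs.
  set (w := exp (- IZR k * ln s)).
  assert (Hw : 0 < w) by apply exp_pos.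
  apply Rle_trans with (sum_f_R0 (fun x => sum_f_R0 (fun r =>
    (binom_pmf m1 p x * s ^ x) * (binom_pmf m2 q r * (/ s) ^ r) * w) m2) m1).
  - unfold prob_diff_le. apply sum_Rle; intros x _. apply sum_Rle; intros r _.
    pose proof (binom_pmf_nonneg m1 p x Hp). pose proof (binom_pmf_nonneg m2 q r Hq).
    assert (0 <= s ^ x) by (apply pow_le; lra).
    assert (0 <= (/ s) ^ r) by (apply pow_le, Rlt_le, Rinv_0_lt_compat; lra).
    destruct Z_le_dec as [Hk|_].
    + pose proof (markov_weight_ge_1 s x r k Hs Hk).
      replace (binom_pmf m1 p x * s ^ x * (binom_pmf m2 q r * (/ s) ^ r) * w)
        with (binom_pmf m1 p x * binom_pmf m2 q r * (s ^ x * (/ s) ^ r * w)) by ring.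
      rewrite <- (Rmult_1_r (binom_pmf m1 p x * binom_pmf m2 q r)) at 1.
      apply Rmult_le_compat_l; auto. apply Rmult_le_pos; auto.
    + apply Rmult_le_pos; [apply Rmult_le_pos; apply Rmult_le_pos|]; lra.
  - replace (sum_f_R0 _ m1) with
      (sum_f_R0 (fun x => binom_pmf m1 p x * s ^ x) m1 *
       sum_f_R0 (fun r => binom_pmf m2 q r * (/ s) ^ r) m2 * w).
    2:{ rewrite sum_f_R0_mul, Rmult_comm, scal_sum. apply sum_eq; intros x _.
        rewrite Rmult_comm, scal_sum. apply sum_eq; intros; ring. }
    apply Rle_trans with
      (exp (INR m1 * (p * (s - 1))) * exp (INR m2 * (q * (/ s - 1))) * w).
    + apply Rmult_le_compat_r; [lra|].
      apply Rmult_le_compat.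
      * apply cond_pos_sum; intros; apply Rmult_le_pos;
          [apply binom_pmf_nonneg; auto|apply pow_le; lra].
      * apply cond_pos_sum; intros; apply Rmult_le_pos;
          [apply binom_pmf_nonneg; auto|apply pow_le, Rlt_le, Rinv_0_lt_compat; lra].
      * apply binom_pgf_le_exp; auto; lra.
      * apply binom_pgf_le_exp; auto. apply Rinv_0_lt_compat; lra.
    + unfold w. rewrite <- !exp_plus. right. f_equal. ring.
Qed.

Definition chernoff_exponent (a b r1 r2 al s : R) : R :=
  r1 * a * (s - 1) + r2 * b * (/ s - 1) - al * ln s.

Definition edge_prob (c : R) (n : nat) : R := c * ln (INR n) / INR n.

Lemma ln_INR_pos n : (2 <= n)%nat -> 0 < ln (INR n).
Proof.
  intros Hn. rewrite <- ln_1. apply ln_increasing; [lra|]. apply (lt_INR 1); lia.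
Qed.

Lemma edge_prob_pos c n : 0 < c -> (2 <= n)%nat -> 0 < edge_prob c n.
Proof.
  intros Hc Hn. pose proof (ln_INR_pos n Hn).
  apply Rdiv_lt_0_compat; [nra|apply lt_0_INR; lia].
Qed.

Lemma prob_diff_le_le_Rpower a b n m1 m2 k s : 0 < a -> 0 < b -> (2 <= n)%nat ->
  edge_prob a n <= 1 -> edge_prob b n <= 1 -> 0 < s <= 1 ->
  prob_diff_le m1 m2 (edge_prob a n) (edge_prob b n) k <=
  Rpower (INR n)
    (chernoff_exponent a b (INR m1 / INR n) (INR m2 / INR n) (IZR k / ln (INR n)) s).
Proof.
  intros ha hb Hn Ha Hb Hs.
  pose proof (ln_INR_pos n Hn).
  assert (0 < INR n) by (apply lt_0_INR; lia).
  pose proof (edge_prob_pos a n ha Hn). pose proof (edge_prob_pos b n hb Hn).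
  eapply Rle_trans; [apply (prob_diff_le_chernoff _ _ _ _ _ s); lra|].
  right. unfold Rpower, chernoff_exponent, edge_prob. f_equal. field. lra.
Qed.

Lemma chernoff_exponent_critical_both a b r1 r2 al :
  0 < a -> 0 < b -> 0 < r1 -> 0 < r2 -> al <= a * r1 - b * r2 ->
  exists s, 0 < s <= 1 /\ r1 * a * s - r2 * b / s = al /\
    chernoff_exponent a b r1 r2 al s =
    - (a * r1 + b * r2 - gamma_ r1 r2 a b al
       - al / 2 * ln (((gamma_ r1 r2 a b al - al) * a * r1)
                      / ((gamma_ r1 r2 a b al + al) * b * r2))).
Proof.
  intros ha hb h1 h2 hal.
  set (G := gamma_ r1 r2 a b al).
  assert (Hp : 0 < r1 * r2 * a * b) by (repeat apply Rmult_lt_0_compat; auto).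
  assert (HG2 : G * G = al ^ 2 + 4 * r1 * r2 * a * b)
    by (apply sqrt_sqrt; nra).
  assert (HG0 : 0 <= G) by apply sqrt_pos.
  assert (Hgm : 0 < G - al) by nra.
  assert (Hgp : 0 < G + al) by nra.
  (* [(G - al) (G + al) = 4 r1 r2 a b] is what makes s a root of the critical equation *)
  assert (HGm : G - al = 4 * r1 * r2 * a * b / (G + al)) by (field_simplify_eq; nra).
  set (s := (al + G) / (2 * r1 * a)).
  assert (Hs : 0 < s) by (apply Rdiv_lt_0_compat; nra).
  assert (Hr2s : r2 * b / s = (G - al) / 2) by (unfold s; rewrite HGm; field; nra).
  exists s. split; [split|split].
  - exact Hs.
  - unfold s. apply Rmult_le_reg_r with (2 * r1 * a); [nra|].
    unfold Rdiv. rewrite Rmult_assoc, Rinv_l by nra.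
    assert (G <= 2 * r1 * a - al); [|lra].
    assert (0 < 2 * r1 * a - al) by nra.
    assert (4 * r1 * a * (r2 * b) <= 4 * r1 * a * (r1 * a - al))
      by (apply Rmult_le_compat_l; nra).
    apply Rsqr_incr_0_var; unfold Rsqr; nra.
  - rewrite Hr2s. unfold s. field. nra.
  - replace ((G - al) * a * r1 / ((G + al) * b * r2)) with (/ (s * s)).
    2:{ unfold s. rewrite HGm. field. nra. }
    rewrite ln_Rinv, ln_mult by nra.
    unfold chernoff_exponent.
    replace (r2 * b * (/ s - 1)) with (r2 * b / s - r2 * b) by (field; lra).
    rewrite Hr2s. unfold s. field. nra.
Qed.

Lemma chernoff_exponent_critical_r2_zero a b r1 al :
  0 < a -> 0 < r1 -> 0 < al -> al <= a * r1 ->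
  exists s, 0 < s <= 1 /\ r1 * a * s - 0 * b / s = al /\
    chernoff_exponent a b r1 0 al s = - (r1 * a - al * ln (exp 1 * r1 * a / al)).
Proof.
  intros ha h1 hal Hal. exists (al / (r1 * a)).
  assert (Hs : 0 < al / (r1 * a)) by (apply Rdiv_lt_0_compat; nra).
  split; [split|split].
  - exact Hs.
  - apply Rmult_le_reg_r with (r1 * a); [nra|].
    unfold Rdiv. rewrite Rmult_assoc, Rinv_l by nra. lra.
  - field. split; nra.
  - unfold chernoff_exponent.
    replace (exp 1 * r1 * a / al) with (exp 1 * / (al / (r1 * a))) by (field; nra).
    rewrite ln_mult, ln_exp, ln_Rinv by (try apply exp_pos; try apply Rinv_0_lt_compat; auto).
    field. nra.
Qed.

Lemma chernoff_exponent_critical_r1_zero a b r2 al :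
  0 < b -> 0 < r2 -> al <= - b * r2 ->
  exists s, 0 < s <= 1 /\ 0 * a * s - r2 * b / s = al /\
    chernoff_exponent a b 0 r2 al s = - (r2 * b + al * ln (- exp 1 * r2 * b / al)).
Proof.
  intros hb h2 Hal.
  assert (hal : 0 < - al) by nra.
  exists (r2 * b / - al).
  assert (Hs : 0 < r2 * b / - al) by (apply Rdiv_lt_0_compat; nra).
  split; [split|split].
  - exact Hs.
  - apply Rmult_le_reg_r with (- al); [lra|].
    unfold Rdiv. rewrite Rmult_assoc, Rinv_l by lra. lra.
  - field. split; nra.
  - unfold chernoff_exponent.
    replace (- exp 1 * r2 * b / al) with (exp 1 * (r2 * b / - al)) by (field; lra).
    rewrite ln_mult, ln_exp by (auto; apply exp_pos).
    field. split; nra.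
Qed.

Lemma chernoff_exponent_critical a b r1 r2 al :
  0 < a -> 0 < b -> 0 <= r1 -> 0 <= r2 -> (0 < r1 \/ 0 < r2) ->
  al <= a * r1 - b * r2 -> (r2 = 0 -> 0 < al) ->
  exists s, 0 < s <= 1 /\ r1 * a * s - r2 * b / s = al /\
    chernoff_exponent a b r1 r2 al s = - g r1 r2 a b al.
Proof.
  intros ha hb h1 h2 hr hal h0. unfold g.
  destruct (Rlt_dec 0 r1) as [p1|p1]; [destruct (Rlt_dec 0 r2) as [p2|p2]|].
  - apply chernoff_exponent_critical_both; auto.
  - assert (r2 = 0) by lra. subst r2.
    apply chernoff_exponent_critical_r2_zero; auto; lra.
  - assert (r1 = 0) by lra. subst r1.
    apply chernoff_exponent_critical_r1_zero; lra.
Qed.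

Theorem prob_diff_le_upper_bound (a b : R) (n m1 m2 : nat) (k : Z) :
  0 < a -> 0 < b -> (2 <= n)%nat ->
  edge_prob a n <= 1 -> edge_prob b n <= 1 ->
  (m1 <> 0 \/ m2 <> 0)%nat ->
  IZR k <= (INR m1 * a - INR m2 * b) * ln (INR n) / INR n ->
  (m2 = 0%nat -> (0 < k)%Z) ->
  prob_diff_le m1 m2 (edge_prob a n) (edge_prob b n) k
  <= Rpower (INR n) (- g (INR m1 / INR n) (INR m2 / INR n) a b (IZR k / ln (INR n))).
Proof.
  intros ha hb Hn Ha Hb Hm Hk Hk0.
  pose proof (ln_INR_pos n Hn).
  assert (0 < INR n) by (apply lt_0_INR; lia).
  destruct (chernoff_exponent_critical a b (INR m1 / INR n) (INR m2 / INR n)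
              (IZR k / ln (INR n))) as [s [Hs [_ <-]]]; auto.
  - apply Rdiv_le_0_compat; auto. apply pos_INR.
  - apply Rdiv_le_0_compat; auto. apply pos_INR.
  - destruct Hm as [Hm|Hm]; [left|right];
      apply Rdiv_lt_0_compat; auto; apply lt_0_INR; lia.
  - apply Rmult_le_reg_r with (ln (INR n)); auto.
    replace (IZR k / ln (INR n) * ln (INR n)) with (IZR k) by (field; lra).
    replace ((a * (INR m1 / INR n) - b * (INR m2 / INR n)) * ln (INR n))
      with ((INR m1 * a - INR m2 * b) * ln (INR n) / INR n) by (field; lra).
    exact Hk.
  - intros Hz. assert (Hm2 : m2 = 0%nat).
    { apply INR_eq. apply Rmult_eq_reg_r with (/ INR n); [|apply Rinv_neq_0_compat; lra].
      unfold Rdiv in Hz. simpl. lra. }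
    apply Rdiv_lt_0_compat; auto. apply IZR_lt; auto.
  - apply prob_diff_le_le_Rpower; auto.
Qed.

Lemma ln_le_sub_1 y : 0 < y -> ln y <= y - 1.
Proof. intros Hy. pose proof (exp_ineq1_le (ln y)). rewrite exp_ln in H; lra. Qed.

Lemma ln_1_sub_ge p : p < 1 -> - (p / (1 - p)) <= ln (1 - p).
Proof.
  intros Hp.
  pose proof (ln_le_sub_1 (/ (1 - p)) ltac:(apply Rinv_0_lt_compat; lra)) as H.
  rewrite ln_Rinv in H by lra.
  replace (/ (1 - p) - 1) with (p / (1 - p)) in H by (field; lra). lra.
Qed.

Lemma ln_fact_le x : (1 <= x)%nat ->
  ln (INR (fact x)) <= 1 - INR x + (INR x + 1) * ln (INR x).
Proof.
  induction x as [|x IH]; intros Hx; [lia|].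
  destruct (Nat.eq_dec x 0) as [->|Hx0].
  - change (fact 1) with 1%nat. rewrite INR_1, ln_1. simpl. lra.
  - specialize (IH ltac:(lia)).
    assert (Hxp : 1 <= INR x) by (apply (le_INR 1); lia).
    rewrite fact_simpl, mult_INR, ln_mult by (apply lt_0_INR; try apply lt_O_fact; lia).
    rewrite S_INR.
    (* [ln (x + 1) - ln x >= 1 / (x + 1)], from [ln y <= y - 1] at [y = x / (x + 1)] *)
    assert (Hk : ln (INR x / (INR x + 1)) <= INR x / (INR x + 1) - 1)
      by (apply ln_le_sub_1, Rdiv_lt_0_compat; lra).
    rewrite ln_div in Hk by lra.
    replace (INR x / (INR x + 1) - 1) with (- / (INR x + 1)) in Hk by (field; lra).
    assert (1 <= (INR x + 1) * (ln (INR x + 1) - ln (INR x))).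
    { apply Rmult_le_reg_l with (/ (INR x + 1)); [apply Rinv_0_lt_compat; lra|].
      rewrite <- Rmult_assoc, Rinv_l, Rmult_1_l, Rmult_1_r by lra. lra. }
    nra.
Qed.

Lemma ln_fact_add_ge j x : (1 <= j)%nat ->
  ln (INR (fact j)) + INR x * ln (INR j) <= ln (INR (fact (j + x))).
Proof.
  intros Hj. induction x as [|x IH].
  - rewrite Nat.add_0_r. simpl. lra.
  - rewrite Nat.add_succ_r, fact_simpl, mult_INR, ln_mult
      by (apply lt_0_INR; try apply lt_O_fact; lia).
    rewrite S_INR.
    assert (ln (INR j) <= ln (INR (S (j + x))))
      by (apply ln_le; [apply lt_0_INR; lia|apply le_INR; lia]).
    lra.
Qed.

Lemma ln_binom_pmf_ge m p x : (1 <= x)%nat -> (x < m)%nat -> 0 < p < 1 ->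
  INR x * ln ((INR m - INR x) * p / INR x) + INR x - 1 - ln (INR x)
    - INR m * p / (1 - p) <= ln (binom_pmf m p x).
Proof.
  intros Hx Hm Hp.
  assert (E : ln (binom_pmf m p x) =
    ln (INR (fact m)) - ln (INR (fact x)) - ln (INR (fact (m - x)))
    + INR x * ln p + INR (m - x) * ln (1 - p)).
  { unfold binom_pmf, Binomial.C.
    rewrite !ln_mult, ln_div, ln_mult, !ln_pow
      by (repeat (apply Rmult_lt_0_compat || apply Rinv_0_lt_compat
                  || apply pow_lt || apply lt_0_INR, lt_O_fact); lra).
    ring. }
  rewrite E.
  assert (Hxr : 1 <= INR x) by (apply (le_INR 1); lia).
  assert (Hmx : INR m - INR x = INR (m - x)) by (rewrite minus_INR; [lra|lia]).
  assert (Hmx1 : 1 <= INR (m - x)) by (apply (le_INR 1); lia).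
  pose proof (ln_fact_le x Hx).
  pose proof (ln_fact_add_ge (m - x) x ltac:(lia)) as Hlo.
  replace (m - x + x)%nat with m in Hlo by lia.
  rewrite Hmx, ln_div, ln_mult by (try apply Rmult_lt_0_compat; lra).
  pose proof (ln_1_sub_ge p ltac:(lra)).
  assert (ln (1 - p) <= 0) by (rewrite <- ln_1; apply ln_le; lra).
  assert (INR (m - x) <= INR m) by (apply le_INR; lia).
  assert (INR m * - (p / (1 - p)) <= INR (m - x) * ln (1 - p)).
  { apply Rle_trans with (INR m * ln (1 - p)); [|nra].
    apply Rmult_le_compat_l; [apply pos_INR|lra]. }
  unfold Rdiv in *. lra.
Qed.

Lemma ln_binom_pmf_0_ge m p : 0 < p < 1 ->
  - (INR m * p / (1 - p)) <= ln (binom_pmf m p 0).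
Proof.
  intros Hp.
  replace (binom_pmf m p 0) with ((1 - p) ^ m)
    by (unfold binom_pmf; rewrite C_n_0, Nat.sub_0_r; simpl; ring).
  rewrite ln_pow by lra.
  pose proof (ln_1_sub_ge p ltac:(lra)).
  replace (- (INR m * p / (1 - p))) with (INR m * - (p / (1 - p))) by (field; lra).
  apply Rmult_le_compat_l; [apply pos_INR|lra].
Qed.

Lemma eventually_ge_2 : eventually (fun n => (2 <= n)%nat).
Proof. exists 2%nat. auto. Qed.

Lemma eventually_gt_of_lim u (l c : R) : is_lim_seq u l -> c < l -> eventually (fun n => c < u n).
Proof.
  intros H Hc. apply is_lim_seq_Reals in H. destruct (H (l - c)) as [N HN]; [lra|].
  exists N. intros n Hn. specialize (HN n Hn). unfold Rdist in HN.
  apply Rabs_lt_between' in HN. lra.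
Qed.

Lemma eventually_lt_of_lim u (l c : R) : is_lim_seq u l -> l < c -> eventually (fun n => u n < c).
Proof.
  intros H Hc. apply is_lim_seq_Reals in H. destruct (H (c - l)) as [N HN]; [lra|].
  exists N. intros n Hn. specialize (HN n Hn). unfold Rdist in HN.
  apply Rabs_lt_between' in HN. lra.
Qed.

Lemma is_lim_seq_ln_INR : is_lim_seq (fun n => ln (INR n)) p_infty.
Proof.
  apply (is_lim_comp_seq ln INR p_infty p_infty); [apply is_lim_ln_p| |apply is_lim_seq_INR].
  exists 0%nat; intros; discriminate.
Qed.

Lemma is_lim_seq_inv_ln_INR : is_lim_seq (fun n => / ln (INR n)) 0.
Proof. apply (is_lim_seq_inv _ p_infty); [apply is_lim_seq_ln_INR|discriminate]. Qed.

Lemma is_lim_seq_ln_INR_div_INR : is_lim_seq (fun n => ln (INR n) / INR n) 0.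
Proof.
  apply (is_lim_comp_seq (fun y => ln y / y) INR p_infty 0);
    [apply is_lim_div_ln_p| |apply is_lim_seq_INR].
  exists 0%nat; intros; discriminate.
Qed.

Lemma is_lim_seq_ln_ln_INR_div : is_lim_seq (fun n => ln (ln (INR n)) / ln (INR n)) 0.
Proof.
  apply (is_lim_comp_seq (fun y => ln y / y) (fun n => ln (INR n)) p_infty 0);
    [apply is_lim_div_ln_p| |apply is_lim_seq_ln_INR].
  exists 0%nat; intros; discriminate.
Qed.

Lemma edge_prob_eventually_lt_1 c : 0 < c -> eventually (fun n => 0 < edge_prob c n < 1).
Proof.
  intros Hc.
  assert (Hlim : is_lim_seq (fun n => c * (ln (INR n) / INR n)) (c * 0))
    by (apply is_lim_seq_mult'; [apply is_lim_seq_const|apply is_lim_seq_ln_INR_div_INR]).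
  generalize (filter_and _ _ eventually_ge_2 (eventually_lt_of_lim _ _ 1 Hlim ltac:(lra))).
  apply filter_imp. intros n [Hn H]. split; [apply edge_prob_pos; auto|].
  unfold edge_prob, Rdiv in *. lra.
Qed.

Lemma edge_prob_lt_1_inv c n : (2 <= n)%nat -> edge_prob c n < 1 -> c * ln (INR n) < INR n.
Proof.
  intros Hn Hp. assert (0 < INR n) by (apply lt_0_INR; lia).
  apply Rmult_lt_reg_r with (/ INR n); [apply Rinv_0_lt_compat; lra|].
  rewrite Rinv_r by lra. unfold edge_prob, Rdiv in Hp. lra.
Qed.

Definition lower_rate (P : nat -> R) (c : R) : Prop :=
  exists l : nat -> R, is_lim_seq l c /\
    eventually (fun n => 0 < P n /\ l n * ln (INR n) <= ln (P n)).

Lemma lower_rate_of_ln_ge (P w : nat -> R) (c : R) :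
  eventually (fun n => 0 < P n /\ w n <= ln (P n)) ->
  is_lim_seq (fun n => w n / ln (INR n)) c -> lower_rate P c.
Proof.
  intros Hev Hw. exists (fun n => w n / ln (INR n)). split; [exact Hw|].
  generalize (filter_and _ _ eventually_ge_2 Hev). apply filter_imp.
  intros n [Hn [HP Hle]]. pose proof (ln_INR_pos n Hn).
  split; [exact HP|]. replace (w n / ln (INR n) * ln (INR n)) with (w n) by (field; lra).
  exact Hle.
Qed.

Lemma lower_rate_mul (P Q : nat -> R) (c d : R) :
  lower_rate P c -> lower_rate Q d -> lower_rate (fun n => P n * Q n) (c + d).
Proof.
  intros [l [Hl EP]] [l' [Hl' EQ]]. exists (fun n => l n + l' n).
  split; [apply is_lim_seq_plus'; auto|].
  generalize (filter_and _ _ EP EQ). apply filter_imp. intros n [[HP HlP] [HQ HlQ]].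
  split; [apply Rmult_lt_0_compat; auto|]. rewrite ln_mult by auto. lra.
Qed.

Lemma lower_rate_le (P Q : nat -> R) (c : R) :
  eventually (fun n => P n <= Q n) -> lower_rate P c -> lower_rate Q c.
Proof.
  intros HPQ [l [Hl EP]]. exists l. split; [exact Hl|].
  generalize (filter_and _ _ HPQ EP). apply filter_imp. intros n [Hle [HP HlP]].
  split; [lra|]. eapply Rle_trans; [exact HlP|]. apply ln_le; auto.
Qed.

Lemma Rpower_exponent_squeeze (P U : nat -> R) (c : R) :
  lower_rate P c -> is_lim_seq U c ->
  eventually (fun n => P n <= Rpower (INR n) (U n)) ->
  exists eps : nat -> R, is_lim_seq eps 0 /\
    eventually (fun n => P n = Rpower (INR n) (c + eps n)).
Proof.
  intros [l [Hl EP]] HU EU.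
  set (v := fun n => ln (P n) / ln (INR n)).
  assert (Ev : eventually (fun n => (2 <= n)%nat /\ 0 < P n /\ l n <= v n <= U n)).
  { generalize (filter_and _ _ eventually_ge_2 (filter_and _ _ EP EU)).
    apply filter_imp. intros n [Hn [[HP HlP] HUn]].
    pose proof (ln_INR_pos n Hn).
    apply ln_le in HUn; [|auto]. rewrite ln_Rpower in HUn.
    split; [auto|split; [auto|unfold v; split]];
      apply Rmult_le_reg_r with (ln (INR n)); auto;
      unfold Rdiv; rewrite Rmult_assoc, Rinv_l; lra. }
  exists (fun n => v n - c). split.
  - replace (Finite 0) with (Finite (c - c)) by (f_equal; ring).
    apply is_lim_seq_minus'; [|apply is_lim_seq_const].
    apply is_lim_seq_le_le_loc with (u := l) (w := U); auto.
    generalize Ev. apply filter_imp. tauto.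
  - generalize Ev. apply filter_imp. intros n [Hn [HP _]].
    pose proof (ln_INR_pos n Hn).
    unfold Rpower, v. replace ((c + (ln (P n) / ln (INR n) - c)) * ln (INR n))
      with (ln (P n)) by (field; lra).
    rewrite exp_ln; auto.
Qed.

(* The exponent of [P{Binom(rho n, c log n / n) = tau log n}]. *)
Definition point_rate (c rho tau : R) : R := tau * (ln (rho * c / tau) + 1) - rho * c.

Lemma binom_pmf_point_lower_rate (c rho tau : R) (m x : nat -> nat) :
  0 < c -> 0 < rho -> 0 < tau ->
  is_lim_seq (fun n => INR (m n) / INR n) rho ->
  is_lim_seq (fun n => INR (x n) / ln (INR n)) tau ->
  eventually (fun n => (x n <= m n)%nat) /\
  lower_rate (fun n => binom_pmf (m n) (edge_prob c n) (x n)) (point_rate c rho tau).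
Proof.
  intros Hc Hr Ht HM HX.
  set (M := fun n => INR (m n) / INR n) in *.
  set (X := fun n => INR (x n) / ln (INR n)) in *.
  set (Q := fun n => ln (INR n) / INR n).
  set (L := fun n => ln (INR n)).
  assert (HQ : is_lim_seq Q 0) by apply is_lim_seq_ln_INR_div_INR.
  (* [M n - X n * Q n = (m n - x n) / n] *)
  assert (HD : is_lim_seq (fun n => M n - X n * Q n) rho).
  { replace (Finite rho) with (Finite (rho - tau * 0)) by (f_equal; ring).
    apply is_lim_seq_minus'; [exact HM|]. apply is_lim_seq_mult'; auto. }
  assert (Hev : eventually (fun n => (2 <= n)%nat /\ 0 < X n /\ 0 < M n - X n * Q n
                                     /\ 0 < edge_prob c n < 1)).
  { generalize (filter_and _ _ eventually_ge_2 (filter_and _ _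
      (eventually_gt_of_lim _ _ 0 HX Ht) (filter_and _ _
      (eventually_gt_of_lim _ _ 0 HD Hr) (edge_prob_eventually_lt_1 c Hc)))).
    apply filter_imp. tauto. }
  assert (Hxm : eventually (fun n => (1 <= x n)%nat /\ (x n < m n)%nat)).
  { generalize Hev. apply filter_imp. intros n [Hn [HXn [HDn _]]].
    pose proof (ln_INR_pos n Hn).
    assert (0 < INR n) by (apply lt_0_INR; lia).
    assert (0 < INR (x n)).
    { apply Rmult_lt_reg_r with (/ ln (INR n)); [apply Rinv_0_lt_compat; auto|].
      unfold X, Rdiv in HXn. lra. }
    assert (INR (x n) < INR (m n)).
    { replace (M n - X n * Q n) with ((INR (m n) - INR (x n)) / INR n) in HDn
        by (unfold M, X, Q; field; lra).
      apply Rmult_lt_reg_r with (/ INR n); [apply Rinv_0_lt_compat; auto|].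
      unfold Rdiv in HDn. lra. }
    split; [apply (INR_lt 0); simpl; lra|apply INR_lt; lra]. }
  split; [generalize Hxm; apply filter_imp; intros; lia|].
  apply lower_rate_of_ln_ge with (w := fun n =>
    INR (x n) * ln ((INR (m n) - INR (x n)) * edge_prob c n / INR (x n)) + INR (x n) - 1
    - ln (INR (x n)) - INR (m n) * edge_prob c n / (1 - edge_prob c n)).
  - generalize (filter_and _ _ Hev Hxm). apply filter_imp.
    intros n [[_ [_ [_ Hp]]] [H1 H2]].
    split; [apply binom_pmf_pos; auto|apply ln_binom_pmf_ge; auto].
  - apply is_lim_seq_ext_loc with (u := fun n =>
      X n * (ln ((M n - X n * Q n) * c / X n) + 1) - / L n
      - (ln (X n) * / L n + ln (L n) / L n) - M n * c / (1 - c * Q n)).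
    + generalize (filter_and _ _ Hev Hxm). apply filter_imp.
      intros n [[Hn [HXn [_ Hp]]] [Hx1 _]].
      pose proof (ln_INR_pos n Hn).
      assert (0 < INR n) by (apply lt_0_INR; lia).
      assert (0 < INR (x n)) by (apply (lt_INR 0); lia).
      pose proof (edge_prob_lt_1_inv c n Hn (proj2 Hp)).
      replace ((INR (m n) - INR (x n)) * edge_prob c n / INR (x n))
        with ((M n - X n * Q n) * c / X n)
        by (unfold M, X, Q, edge_prob; field; lra).
      replace (ln (INR (x n))) with (ln (X n) + ln (L n))
        by (rewrite <- ln_mult by auto; f_equal; unfold X, L; field; lra).
      unfold M, X, Q, L, edge_prob. field. lra.
    + replace (point_rate c rho tau) with
        (tau * (ln (rho * c / tau) + 1) - 0 - (ln tau * 0 + 0) - rho * c / (1 - c * 0))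
        by (unfold point_rate; field; lra).
      apply is_lim_seq_minus'; [apply is_lim_seq_minus'; [apply is_lim_seq_minus'|]|].
      * apply is_lim_seq_mult'; [exact HX|]. apply is_lim_seq_plus'; [|apply is_lim_seq_const].
        apply is_lim_seq_continuous.
        { apply continuity_pt_filterlim, continuous_ln. apply Rdiv_lt_0_compat; nra. }
        replace (rho * c / tau) with ((rho - tau * 0) * c / tau) by (field; lra).
        apply is_lim_seq_div'; [|exact HX|lra].
        apply is_lim_seq_mult'; [|apply is_lim_seq_const].
        apply is_lim_seq_minus'; [exact HM|]. apply is_lim_seq_mult'; auto.
      * apply is_lim_seq_inv_ln_INR.
      * apply is_lim_seq_plus'; [|apply is_lim_seq_ln_ln_INR_div].
        apply is_lim_seq_mult'; [|apply is_lim_seq_inv_ln_INR].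
        apply is_lim_seq_continuous; [|exact HX].
        apply continuity_pt_filterlim, continuous_ln. exact Ht.
      * apply is_lim_seq_div'; [apply is_lim_seq_mult'; [exact HM|apply is_lim_seq_const]| |lra].
        apply is_lim_seq_minus'; [apply is_lim_seq_const|].
        apply is_lim_seq_mult'; [apply is_lim_seq_const|exact HQ].
Qed.

Lemma binom_pmf_zero_lower_rate (c rho : R) (m : nat -> nat) :
  0 < c -> is_lim_seq (fun n => INR (m n) / INR n) rho ->
  lower_rate (fun n => binom_pmf (m n) (edge_prob c n) 0) (- (rho * c)).
Proof.
  intros Hc HM.
  apply lower_rate_of_ln_ge
    with (w := fun n => - (INR (m n) * edge_prob c n / (1 - edge_prob c n))).
  - generalize (edge_prob_eventually_lt_1 c Hc). apply filter_imp. intros n Hp.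
    split; [apply binom_pmf_pos|apply ln_binom_pmf_0_ge]; auto.
  - apply is_lim_seq_ext_loc
      with (u := fun n => - (INR (m n) / INR n * c / (1 - c * (ln (INR n) / INR n)))).
    + generalize (filter_and _ _ eventually_ge_2 (edge_prob_eventually_lt_1 c Hc)).
      apply filter_imp. intros n [Hn Hp].
      pose proof (ln_INR_pos n Hn).
      assert (0 < INR n) by (apply lt_0_INR; lia).
      pose proof (edge_prob_lt_1_inv c n Hn (proj2 Hp)).
      unfold edge_prob. field. lra.
    + replace (- (rho * c)) with (- (rho * c / (1 - c * 0))) by (field; lra).
      apply (is_lim_seq_opp _ (rho * c / (1 - c * 0))).
      apply is_lim_seq_div'; [apply is_lim_seq_mult'; [exact HM|apply is_lim_seq_const]| |lra].
      apply is_lim_seq_minus'; [apply is_lim_seq_const|].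
      apply is_lim_seq_mult'; [apply is_lim_seq_const|apply is_lim_seq_ln_INR_div_INR].
Qed.

Lemma is_lim_seq_up_log (t : R) :
  is_lim_seq (fun n => IZR (up (t * ln (INR n))) / ln (INR n)) t.
Proof.
  apply is_lim_seq_le_le_loc with (u := fun _ => t) (w := fun n => t + / ln (INR n)).
  - generalize eventually_ge_2. apply filter_imp. intros n Hn.
    pose proof (ln_INR_pos n Hn).
    destruct (archimed (t * ln (INR n))) as [Hup Hup'].
    split; apply Rmult_le_reg_r with (ln (INR n)); auto; unfold Rdiv;
      rewrite ?Rmult_plus_distr_r, Rmult_assoc, Rinv_l; lra.
  - apply is_lim_seq_const.
  - replace (Finite t) with (Finite (t + 0)) by (f_equal; ring).
    apply is_lim_seq_plus'; [apply is_lim_seq_const|apply is_lim_seq_inv_ln_INR].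
Qed.

Lemma is_lim_seq_Z_to_nat_log (z : nat -> Z) (t : R) : 0 < t ->
  is_lim_seq (fun n => IZR (z n) / ln (INR n)) t ->
  eventually (fun n => (0 <= z n)%Z) /\
  is_lim_seq (fun n => INR (Z.to_nat (z n)) / ln (INR n)) t.
Proof.
  intros Ht Hz.
  assert (Hnn : eventually (fun n => (0 <= z n)%Z)).
  { generalize (filter_and _ _ eventually_ge_2 (eventually_gt_of_lim _ _ 0 Hz Ht)).
    apply filter_imp. intros n [Hn H]. pose proof (ln_INR_pos n Hn).
    apply le_IZR. apply Rlt_le, Rmult_lt_reg_r with (/ ln (INR n)).
    - apply Rinv_0_lt_compat; auto.
    - unfold Rdiv in H. lra. }
  split; [exact Hnn|].
  apply is_lim_seq_ext_loc with (2 := Hz). generalize Hnn. apply filter_imp.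
  intros n H. rewrite (INR_IZR_INZ (Z.to_nat (z n))), Z2Nat.id; auto.
Qed.

Definition prob_diff_seq (a b : R) (m1 m2 : nat -> nat) (k : nat -> Z) (n : nat) : R :=
  prob_diff_le (m1 n) (m2 n) (edge_prob a n) (edge_prob b n) (k n).

Lemma prob_diff_seq_lower_rate (a b c1 c2 : R) (m1 m2 x r : nat -> nat) (k : nat -> Z) :
  0 < a -> 0 < b ->
  eventually (fun n => (x n <= m1 n)%nat /\ (r n <= m2 n)%nat /\
                       (Z.of_nat (x n) - Z.of_nat (r n) <= k n)%Z) ->
  lower_rate (fun n => binom_pmf (m1 n) (edge_prob a n) (x n)) c1 ->
  lower_rate (fun n => binom_pmf (m2 n) (edge_prob b n) (r n)) c2 ->
  lower_rate (prob_diff_seq a b m1 m2 k) (c1 + c2).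
Proof.
  intros ha hb Hev H1 H2. apply lower_rate_le with (2 := lower_rate_mul _ _ _ _ H1 H2).
  generalize (filter_and _ _ Hev (filter_and _ _
    (edge_prob_eventually_lt_1 a ha) (edge_prob_eventually_lt_1 b hb))).
  apply filter_imp. intros n [[Hx [Hr Hk]] [Ha Hb]].
  apply binom_pmf_mul_le_prob_diff_le; auto; lra.
Qed.

Section LowerRateAtCriticalPoint.

Variables (a b al r1 r2 s : R) (m1 m2 : nat -> nat) (k : nat -> Z).
Hypotheses (ha : 0 < a) (hb : 0 < b) (hs : 0 < s)
  (Hcrit : r1 * a * s - r2 * b / s = al)
  (HM1 : is_lim_seq (fun n => INR (m1 n) / INR n) r1)
  (HM2 : is_lim_seq (fun n => INR (m2 n) / INR n) r2)
  (HK : is_lim_seq (fun n => IZR (k n) / ln (INR n)) al).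

(* Take [r ~ (r2 b / s) log n] and [x = k + r ~ (r1 a s) log n]. *)
Lemma lower_rate_critical_both : 0 < r1 -> 0 < r2 ->
  lower_rate (prob_diff_seq a b m1 m2 k) (chernoff_exponent a b r1 r2 al s).
Proof.
  intros h1 h2.
  set (t1 := r1 * a * s). set (t2 := r2 * b / s).
  assert (Ht1 : 0 < t1) by (unfold t1; repeat apply Rmult_lt_0_compat; auto).
  assert (Ht2 : 0 < t2) by (apply Rdiv_lt_0_compat; nra).
  set (zr := fun n => up (t2 * ln (INR n))).
  set (zx := fun n => (k n + zr n)%Z).
  assert (Hzr : is_lim_seq (fun n => IZR (zr n) / ln (INR n)) t2) by apply is_lim_seq_up_log.
  assert (Hzx : is_lim_seq (fun n => IZR (zx n) / ln (INR n)) t1).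
  { replace t1 with (al + t2) by (unfold t1, t2; lra).
    apply is_lim_seq_ext with (u := fun n => IZR (k n) / ln (INR n) + IZR (zr n) / ln (INR n)).
    - intros n. unfold zx. rewrite plus_IZR. unfold Rdiv. ring.
    - apply is_lim_seq_plus'; auto. }
  destruct (is_lim_seq_Z_to_nat_log zx t1 Ht1 Hzx) as [Ex Lx].
  destruct (is_lim_seq_Z_to_nat_log zr t2 Ht2 Hzr) as [Er Lr].
  destruct (binom_pmf_point_lower_rate a r1 t1 m1 _ ha h1 Ht1 HM1 Lx) as [Xm Rx].
  destruct (binom_pmf_point_lower_rate b r2 t2 m2 _ hb h2 Ht2 HM2 Lr) as [Rm Rr].
  replace (chernoff_exponent a b r1 r2 al s)
    with (point_rate a r1 t1 + point_rate b r2 t2).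
  - apply prob_diff_seq_lower_rate with (4 := Rx) (5 := Rr); auto.
    generalize (filter_and _ _ (filter_and _ _ Ex Er) (filter_and _ _ Xm Rm)).
    apply filter_imp. intros n [[Hx Hr] [Hxm Hrm]].
    split; [auto|split; [auto|]]. rewrite !Z2Nat.id by auto. unfold zx. lia.
  - unfold point_rate, chernoff_exponent.
    replace (r1 * a / t1) with (/ s) by (unfold t1; field; lra).
    replace (r2 * b / t2) with s by (unfold t2; field; lra).
    rewrite ln_Rinv, <- Hcrit by auto. unfold t1, t2. field. lra.
Qed.

Lemma lower_rate_critical_r2_zero : 0 < r1 -> r2 = 0 -> 0 < al ->
  lower_rate (prob_diff_seq a b m1 m2 k) (chernoff_exponent a b r1 r2 al s).
Proof.
  intros h1 h2 hal. subst r2.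
  destruct (is_lim_seq_Z_to_nat_log k al hal HK) as [Ek Lk].
  destruct (binom_pmf_point_lower_rate a r1 al m1 _ ha h1 hal HM1 Lk) as [Xm Rx].
  replace (chernoff_exponent a b r1 0 al s) with (point_rate a r1 al + - (0 * b)).
  - apply prob_diff_seq_lower_rate with (r := fun _ => 0%nat)
      (4 := Rx) (5 := binom_pmf_zero_lower_rate b 0 m2 hb HM2); auto.
    generalize (filter_and _ _ Ek Xm). apply filter_imp. intros n [Hk Hxm].
    split; [auto|split; [lia|]]. rewrite Z2Nat.id by auto. lia.
  - unfold point_rate, chernoff_exponent.
    replace (r1 * a / al) with (/ s) by (rewrite <- Hcrit; field; nra).
    rewrite ln_Rinv, <- Hcrit by auto. field. lra.
Qed.

Lemma lower_rate_critical_r1_zero : r1 = 0 -> 0 < r2 ->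
  lower_rate (prob_diff_seq a b m1 m2 k) (chernoff_exponent a b r1 r2 al s).
Proof.
  intros h1 h2. subst r1.
  assert (hal : 0 < - al).
  { rewrite <- Hcrit. assert (0 < r2 * b / s) by (apply Rdiv_lt_0_compat; nra). lra. }
  assert (HK' : is_lim_seq (fun n => IZR (- k n) / ln (INR n)) (- al)).
  { apply is_lim_seq_ext with (u := fun n => - (IZR (k n) / ln (INR n))).
    - intros n. rewrite opp_IZR. unfold Rdiv. ring.
    - apply (is_lim_seq_opp _ al). exact HK. }
  destruct (is_lim_seq_Z_to_nat_log (fun n => (- k n)%Z) (- al) hal HK') as [Ek Lk].
  destruct (binom_pmf_point_lower_rate b r2 (- al) m2 _ hb h2 hal HM2 Lk) as [Rm Rr].
  replace (chernoff_exponent a b 0 r2 al s) with (- (0 * a) + point_rate b r2 (- al)).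
  - apply prob_diff_seq_lower_rate with (x := fun _ => 0%nat)
      (4 := binom_pmf_zero_lower_rate a 0 m1 ha HM1) (5 := Rr); auto.
    generalize (filter_and _ _ Ek Rm). apply filter_imp. intros n [Hk Hrm].
    split; [lia|split; [auto|]]. rewrite Z2Nat.id by auto. lia.
  - unfold point_rate, chernoff_exponent.
    replace (r2 * b / - al) with s by (rewrite <- Hcrit; field; nra).
    replace (r2 * b * (/ s - 1)) with (r2 * b / s - r2 * b) by (field; lra).
    rewrite <- Hcrit. ring.
Qed.

End LowerRateAtCriticalPoint.

Theorem prob_diff_seq_exponent (a b al r1 r2 : R) (m1 m2 : nat -> nat) (k : nat -> Z) :
  0 < a -> 0 < b -> 0 <= r1 -> 0 <= r2 -> (0 < r1 \/ 0 < r2) ->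
  is_lim_seq (fun n => INR (m1 n) / INR n) r1 ->
  is_lim_seq (fun n => INR (m2 n) / INR n) r2 ->
  is_lim_seq (fun n => IZR (k n) / ln (INR n)) al ->
  al <= a * r1 - b * r2 -> (r2 = 0 -> 0 < al) ->
  exists eps : nat -> R, is_lim_seq eps 0 /\
    eventually (fun n => prob_diff_seq a b m1 m2 k n = Rpower (INR n) (- g r1 r2 a b al + eps n)).
Proof.
  intros ha hb h1 h2 hr HM1 HM2 HK Hal H0.
  destruct (chernoff_exponent_critical a b r1 r2 al) as [s [Hs [Hcrit <-]]]; auto.
  apply Rpower_exponent_squeeze with (U := fun n =>
    chernoff_exponent a b (INR (m1 n) / INR n) (INR (m2 n) / INR n) (IZR (k n) / ln (INR n)) s).
  - destruct (Rlt_dec 0 r1), (Rlt_dec 0 r2).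
    + apply lower_rate_critical_both; auto; lra.
    + apply lower_rate_critical_r2_zero; auto; lra.
    + apply lower_rate_critical_r1_zero; auto; lra.
    + lra.
  - unfold chernoff_exponent.
    apply is_lim_seq_minus'; [apply is_lim_seq_plus'|];
      apply is_lim_seq_mult'; try apply is_lim_seq_const; auto;
      apply is_lim_seq_mult'; try apply is_lim_seq_const; auto.
  - generalize (filter_and _ _ eventually_ge_2 (filter_and _ _
      (edge_prob_eventually_lt_1 a ha) (edge_prob_eventually_lt_1 b hb))).
    apply filter_imp. intros n [Hn [Ha Hb]].
    apply prob_diff_le_le_Rpower; auto; lra.
Qed.

Theorem lemma2 (a b al r1 r2 : R)
  (ha : 0 < a) (hb : 0 < b) (hr1 : 0 <= r1) (hr2 : 0 <= r2)
  (hr : 0 < r1 \/ 0 < r2) :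
  (forall (m1 m2 : nat -> nat) (k : nat -> Z),
     Un_cv (fun n => INR (m1 n) / INR n) r1 ->
     Un_cv (fun n => INR (m2 n) / INR n) r2 ->
     Un_cv (fun n => IZR (k n) / ln (INR n)) al ->
     al <= a * r1 - b * r2 ->
     (r2 = 0 -> 0 < al) ->
     exists eps : nat -> R, Un_cv eps 0 /\
       exists N : nat, forall n : nat, (N <= n)%nat ->
         prob_diff_le (m1 n) (m2 n) (a * ln (INR n) / INR n)
                      (b * ln (INR n) / INR n) (k n)
         = Rpower (INR n) (- g r1 r2 a b al + eps n))
  /\
  (forall (n m1 m2 : nat) (k : Z),
     (2 <= n)%nat ->
     a * ln (INR n) / INR n <= 1 ->
     b * ln (INR n) / INR n <= 1 ->
     (m1 <> 0 \/ m2 <> 0)%nat ->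
     IZR k <= (INR m1 * a - INR m2 * b) * ln (INR n) / INR n ->
     (m2 = 0%nat -> (0 < k)%Z) ->
     prob_diff_le m1 m2 (a * ln (INR n) / INR n) (b * ln (INR n) / INR n) k
     <= Rpower (INR n)
          (- g (INR m1 / INR n) (INR m2 / INR n) a b (IZR k / ln (INR n)))).
Proof.
  split.
  - intros m1 m2 k HM1 HM2 HK Hal H0.
    apply is_lim_seq_Reals in HM1, HM2, HK.
    destruct (prob_diff_seq_exponent a b al r1 r2 m1 m2 k) as [eps [Heps HN]]; auto.
    exists eps. split; [apply is_lim_seq_Reals; exact Heps|exact HN].
  - intros n m1 m2 k. apply prob_diff_le_upper_bound; auto.
Qed.
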